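(* Lifting preserves connected limits, in particular projective limits. Precisely: let $\mathbf I$ be a connected small category, $F\colon\mathbf I\to\mathbf{Top}$ a diagram, and $X,(p_i)_{i\in|\mathbf I|}$ a limit of $F$ in $\mathbf{Top}$. Then $X_\bot,(p_{i\bot})_{i\in|\mathbf I|}$ is a limit of the diagram $(\cdot)_\bot\circ F$.
   Context: $\mathbf{Top}$ is the category of topological spaces and continuous maps; $|\mathbf I|$ is the set of objects of $\mathbf I$. A small category is connected if it has at least one object and the smallest equivalence relation on objects relating $i,j$ whenever there is a morphism $i\to j$ relates all objects. The lifting $Y_\bot$ of a space $Y$ is obtained by adding a fresh point $\bot$, its open sets being the open sets of $Y$ together with $Y_\bot$ itself. For a continuous $f\colon Y\to Z$, $f_\bot\colon Y_\bot\to Z_\bot$ equals $f$ on $Y$ and maps $\bot$ to $\bot$; this makes $(\cdot)_\bot$ a functor. *)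

From Stdlib Require Import Classical Relations.
Set Implicit Arguments.

Record space := Space {
  carrier :> Type;
  is_open : (carrier -> Prop) -> Prop;
  open_ext : forall U V : carrier -> Prop,
      (forall x, U x <-> V x) -> is_open U -> is_open V;
  open_full : is_open (fun _ => True);
  open_inter : forall U V, is_open U -> is_open V -> is_open (fun x => U x /\ V x);
  open_union : forall (J : Type) (U : J -> carrier -> Prop),
      (forall j, is_open (U j)) -> is_open (fun x => exists j, U j x)
}.

Arguments open_ext {s} U V _ _.
Arguments open_full {s}.
Arguments open_inter {s} U V _ _.
Arguments open_union {s} {J} U _.

Record cmap (X Y : space) := CMap {
  cfun :> X -> Y;
  cfun_cont : forall V, is_open Y V -> is_open X (fun x => V (cfun x))
}.

(* Lifting: Y_bot has carrier option Y, with None playing the role of bot;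
   open sets are Y_bot itself and (the images of) the open sets of Y. *)
Definition lift_open (X : space) (U : option X -> Prop) : Prop :=
  (forall x, U x) \/ (~ U None /\ is_open X (fun y => U (Some y))).
Arguments lift_open {X} U.

Lemma lift_open_ext (X : space) (U V : option X -> Prop) :
  (forall x, U x <-> V x) -> lift_open U -> lift_open V.
Proof.
  intros H [HU | [HN HU]].
  - left; intro x; apply H, HU.
  - right; split.
    + intro HV; apply HN, H, HV.
    + apply (open_ext (fun y => U (Some y))); [intro y; apply H | exact HU].
Qed.

Lemma lift_open_full (X : space) : @lift_open X (fun _ => True).
Proof. left; trivial. Qed.

Lemma lift_open_inter (X : space) (U V : option X -> Prop) :
  lift_open U -> lift_open V -> lift_open (fun x => U x /\ V x).
Proof.
  intros [HU | [UN HU]] [HV | [VN HV]].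
  - left; intro x; split; auto.
  - right; split; [intros [_ h]; auto|].
    apply (open_ext (fun y => V (Some y))); [intro y; split; [split; auto | tauto] | exact HV].
  - right; split; [intros [h _]; auto|].
    apply (open_ext (fun y => U (Some y))); [intro y; split; [split; auto | tauto] | exact HU].
  - right; split; [intros [h _]; auto|].
    exact (open_inter _ _ HU HV).
Qed.

Lemma lift_open_union (X : space) (J : Type) (U : J -> option X -> Prop) :
  (forall j, lift_open (U j)) -> lift_open (fun x => exists j, U j x).
Proof.
  intro H.
  destruct (classic (exists j, forall x, U j x)) as [[j Hj] | Hn].
  - left; intro x; exists j; apply Hj.
  - right; split.
    + intros [j Hj]. destruct (H j) as [Hf | [HN _]]; [apply Hn; exists j; exact Hf | exact (HN Hj)].
    + apply (open_union (fun j y => U j (Some y))).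
      intro j; destruct (H j) as [Hf | [_ Ho]]; [exfalso; apply Hn; exists j; exact Hf | exact Ho].
Qed.

Definition lift (X : space) : space :=
  @Space (option X) (@lift_open X) (@lift_open_ext X) (@lift_open_full X)
         (@lift_open_inter X) (@lift_open_union X).

Definition lift_fun (X Y : space) (f : X -> Y) (o : option X) : option Y :=
  match o with None => None | Some x => Some (f x) end.

Arguments lift_fun {X Y} f o.

Lemma lift_fun_cont (X Y : space) (f : cmap X Y) :
  forall V, is_open (lift Y) V -> is_open (lift X) (fun x => V (lift_fun f x)).
Proof.
  intros V [HV | [HN HV]].
  - left; intro x; apply HV.
  - right; split; [exact HN |].
    exact (cfun_cont f _ HV).
Qed.

Definition lift_map (X Y : space) (f : cmap X Y) : cmap (lift X) (lift Y) :=
  @CMap (lift X) (lift Y) (lift_fun f) (lift_fun_cont f).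

Arguments lift_map {X Y} f.

Record category := Category {
  obj : Type;
  hom : obj -> obj -> Type;
  idm : forall a, hom a a;
  comp : forall a b c, hom b c -> hom a b -> hom a c;
  comp_id_l : forall a b (f : hom a b), comp (idm b) f = f;
  comp_id_r : forall a b (f : hom a b), comp f (idm a) = f;
  comp_assoc : forall a b c d (h : hom c d) (g : hom b c) (f : hom a b),
      comp h (comp g f) = comp (comp h g) f
}.
Arguments idm {c} a : rename.
Arguments comp {c a b c0} _ _ : rename.

Definition connected (I : category) : Prop :=
  inhabited (obj I) /\
  forall i j : obj I,
    clos_refl_sym_trans (obj I) (fun a b => inhabited (hom I a b)) i j.

Record diagram (I : category) := Diagram {
  dobj : obj I -> space;
  dmap : forall i j, hom I i j -> cmap (dobj i) (dobj j);
  dmap_id : forall i x, dmap i i (idm i) x = x;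
  dmap_comp : forall i j k (g : hom I j k) (f : hom I i j) x,
      dmap i k (comp g f) x = dmap j k g (dmap i j f x)
}.
Arguments dmap {I} d {i j} _.

Lemma lift_dmap_id (I : category) (D : diagram I) :
  forall i x, lift_map (dmap D (idm i)) x = x.
Proof. intros i [x|]; simpl; [rewrite dmap_id|]; reflexivity. Qed.

Lemma lift_dmap_comp (I : category) (D : diagram I) :
  forall i j k (g : hom I j k) (f : hom I i j) x,
    lift_map (dmap D (comp g f)) x = lift_map (dmap D g) (lift_map (dmap D f) x).
Proof. intros i j k g f [x|]; simpl; [rewrite dmap_comp|]; reflexivity. Qed.

Definition lift_diagram (I : category) (D : diagram I) : diagram I :=
  @Diagram I (fun i => lift (dobj D i))
    (fun i j u => lift_map (dmap D u)) (@lift_dmap_id I D) (@lift_dmap_comp I D).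

Definition is_cone (I : category) (D : diagram I) (X : space)
    (p : forall i, cmap X (dobj D i)) : Prop :=
  forall i j (u : hom I i j) (x : X), dmap D u (p i x) = p j x.

Definition is_limit (I : category) (D : diagram I) (X : space)
    (p : forall i, cmap X (dobj D i)) : Prop :=
  is_cone D p /\
  forall (Z : space) (q : forall i, cmap Z (dobj D i)),
    is_cone D q ->
    exists h : cmap Z X,
      (forall i z, p i (h z) = q i z) /\
      (forall h' : cmap Z X, (forall i z, p i (h' z) = q i z) -> forall z, h' z = h z).

(* For a cone q into the lifted diagram, the set of points z with q_i z = bot
   does not depend on i: a morphism u : i -> j gives q_j = (F u)_bot o q_i,
   and connectedness propagates this along zig-zags.  On the open complement
   U of that set, q is an honest cone into F, so it factors uniquely through
   X; sending the rest of Z to bot extends the factorisation continuously,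
   because the only open set of X_bot containing bot is X_bot itself. *)
From Stdlib Require Import Classical ClassicalEpsilon ProofIrrelevance Relations.

Definition oget {A : Type} {o : option A} : o <> None -> A :=
  match o return o <> None -> A with
  | Some a => fun _ => a
  | None => fun H => match H eq_refl with end
  end.

Lemma oget_some {A : Type} {o : option A} (H : o <> None) : o = Some (oget H).
Proof. destruct o; [reflexivity | now elim H]. Qed.

Lemma lift_fun_eq_None {X Y : space} (f : X -> Y) (o : option X) :
  lift_fun f o = None <-> o = None.
Proof. destruct o; simpl; split; congruence. Qed.

Definition lift_pred {A : Type} (V : A -> Prop) (o : option A) : Prop :=
  match o with Some y => V y | None => False end.

Lemma lift_pred_open {X : space} {V : X -> Prop} :
  is_open X V -> is_open (lift X) (lift_pred V).
Proof. intro HV; right; split; [intro F; exact F | exact HV]. Qed.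

Lemma defined_open (X : space) : is_open (lift X) (fun o : option X => o <> None).
Proof.
  right; split; [intro H; now apply H |].
  apply (open_ext (fun _ => True)); [| exact open_full].
  intro y; split; [intros _; discriminate | trivial].
Qed.

Section OpenSubspace.

Context {Z : space} {P : Z -> Prop} (P_open : is_open Z P).

(* Since P is open, the subspace topology on P is given by the subsets of P
   that are open in Z. *)
Definition sub_open (V : {z | P z} -> Prop) : Prop :=
  is_open Z (fun z => exists n : P z, V (exist _ z n)).

Lemma sub_open_ext (U V : {z | P z} -> Prop) :
  (forall s, U s <-> V s) -> sub_open U -> sub_open V.
Proof.
  intro HUV; apply open_ext.
  intro z; split; intros [n H]; exists n; apply HUV, H.
Qed.

Lemma sub_open_full : sub_open (fun _ => True).
Proof.
  apply (open_ext P); [| exact P_open].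
  intro z; split; [intro n; now exists n | intros [n _]; exact n].
Qed.

Lemma sub_open_inter (U V : {z | P z} -> Prop) :
  sub_open U -> sub_open V -> sub_open (fun s => U s /\ V s).
Proof.
  intros HU HV; generalize (open_inter _ _ HU HV); apply open_ext.
  intro z; split.
  - intros [[n HUz] [n' HVz]]; exists n; split; [exact HUz |].
    now rewrite (proof_irrelevance _ n n').
  - intros [n [HUz HVz]]; split; exists n; assumption.
Qed.

Lemma sub_open_union (J : Type) (U : J -> {z | P z} -> Prop) :
  (forall j, sub_open (U j)) -> sub_open (fun s => exists j, U j s).
Proof.
  intro HU; generalize (open_union _ HU); apply open_ext.
  intro z; split; [intros [j [n H]] | intros [n [j H]]]; eauto.
Qed.

Definition subspace : space :=
  @Space {z | P z} sub_open sub_open_ext sub_open_full sub_open_inter sub_open_union.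

Section Lower.

Context {Y : space} (f : cmap Z (lift Y)) (f_defined : forall z, P z -> f z <> None).

Definition lower_fun (s : subspace) : Y :=
  oget (f_defined _ (proj2_sig s)).

Lemma lower_fun_cont (V : Y -> Prop) :
  is_open Y V -> is_open subspace (fun s => V (lower_fun s)).
Proof.
  intro HV; simpl; unfold sub_open.
  generalize (open_inter _ _ (cfun_cont f _ (lift_pred_open HV)) P_open).
  apply open_ext; intro z; split.
  - intros [Hz n]; exists n.
    now rewrite (oget_some (f_defined z n)) in Hz.
  - intros [n Hz]; split; [| exact n].
    now rewrite (oget_some (f_defined z n)).
Qed.

Definition lower : cmap subspace Y := @CMap subspace Y lower_fun lower_fun_cont.

Lemma lower_spec (s : subspace) : f (proj1_sig s) = Some (lower s).
Proof. apply oget_some. Qed.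

End Lower.

Lemma lower_natural {Y W : space} (k : cmap Y W)
    (f : cmap Z (lift Y)) (Hf : forall z, P z -> f z <> None)
    (g : cmap Z (lift W)) (Hg : forall z, P z -> g z <> None) :
  (forall z, lift_fun k (f z) = g z) ->
  forall s, k (lower f Hf s) = lower g Hg s.
Proof.
  intros Hfg s; specialize (Hfg (proj1_sig s)).
  rewrite (lower_spec f Hf), (lower_spec g Hg) in Hfg.
  now injection Hfg.
Qed.

Section Extend.

Context {Y : space} (g : cmap subspace Y).

Definition extend_fun (z : Z) : option Y :=
  match excluded_middle_informative (P z) with
  | left n => Some (g (exist _ z n))
  | right _ => None
  end.

Lemma extend_fun_in (s : subspace) : extend_fun (proj1_sig s) = Some (g s).
Proof.
  destruct s as [z n]; unfold extend_fun; simpl.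
  destruct (excluded_middle_informative (P z)) as [n' | n']; [| contradiction].
  now rewrite (proof_irrelevance _ n' n).
Qed.

Lemma extend_fun_out (z : Z) : ~ P z -> extend_fun z = None.
Proof.
  intro n; unfold extend_fun.
  destruct (excluded_middle_informative (P z)); [contradiction | reflexivity].
Qed.

Lemma extend_fun_cont (W : option Y -> Prop) :
  is_open (lift Y) W -> is_open Z (fun z => W (extend_fun z)).
Proof.
  intros [HW | [HWN HW]].
  - apply (open_ext (fun _ => True)); [| exact open_full].
    intro z; split; auto.
  - generalize (cfun_cont g _ HW); simpl; unfold sub_open; apply open_ext.
    intro z; split.
    + intros [n Hz].
      pose proof (extend_fun_in (exist _ z n)) as E; simpl in E.
      now rewrite E.
    + destruct (classic (P z)) as [n | n].
      * pose proof (extend_fun_in (exist _ z n)) as E; simpl in E.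
        intro Hz; exists n; now rewrite E in Hz.
      * now rewrite extend_fun_out.
Qed.

Definition extend : cmap Z (lift Y) := @CMap Z (lift Y) extend_fun extend_fun_cont.

End Extend.

End OpenSubspace.

Section LiftedCones.

Context {I : category} {D : diagram I}.

Lemma lift_cone {X : space} {p : forall i, cmap X (dobj D i)} :
  is_cone D p -> is_cone (lift_diagram D) (X := lift X) (fun i => lift_map (p i)).
Proof. intros Hp i j u [x |]; simpl; [rewrite Hp |]; reflexivity. Qed.

Lemma lifted_cone_None_iff {Z : space} {q : forall i, cmap Z (dobj (lift_diagram D) i)}
    {i j : obj I} :
  is_cone (lift_diagram D) q ->
  clos_refl_sym_trans _ (fun a b => inhabited (hom I a b)) i j ->
  forall z, q i z = None <-> q j z = None.
Proof.
  intros Hq Hij z; induction Hij as [a b [u] | | | ]; try tauto.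
  rewrite <- (Hq a b u z); symmetry; apply lift_fun_eq_None.
Qed.

Lemma lower_cone {Z : space} {P : Z -> Prop} (HP : is_open Z P)
    {q : forall i, cmap Z (dobj (lift_diagram D) i)}
    (Hdef : forall i z, P z -> q i z <> None) :
  is_cone (lift_diagram D) q -> is_cone D (fun i => lower HP (q i) (Hdef i)).
Proof. intros Hq i j u; apply lower_natural, Hq. Qed.

End LiftedCones.

Theorem lemma3p6 (I : category) (D : diagram I) (X : space)
    (p : forall i, cmap X (dobj D i)) :
  connected I ->
  is_limit D p ->
  is_limit (lift_diagram D) (X := lift X) (fun i => lift_map (p i)).
Proof.
  intros [[i0] Hconn] [Hcone Hlim]; split; [now apply lift_cone |].
  intros Z q Hq; change (forall i, cmap Z (lift (dobj D i))) in q.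
  set (P z := q i0 z <> None).
  pose proof (cfun_cont (q i0) _ (defined_open _)) as HP.
  assert (Hdef : forall i z, P z -> q i z <> None).
  { intros i z Hz Hi; apply Hz, (lifted_cone_None_iff Hq (Hconn i0 i)), Hi. }
  assert (Hundef : forall i z, ~ P z -> q i z = None).
  { intros i z Hz; apply (lifted_cone_None_iff Hq (Hconn i0 i)), NNPP, Hz. }
  destruct (Hlim _ _ (lower_cone HP Hdef Hq)) as [h [Hh Hu]].
  exists (extend HP h); split.
  - intros i z; destruct (classic (P z)) as [n | n].
    + simpl; change z with (proj1_sig (exist P z n)).
      rewrite extend_fun_in, (lower_spec HP (q i) (Hdef i)); simpl.
      now rewrite Hh.
    + simpl; rewrite extend_fun_out, Hundef; trivial.
  - intros h' Hh' z; simpl.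
    assert (Hh'def : forall y, P y -> h' y <> None).
    { intros y Hy E; apply Hy.
      specialize (Hh' i0 y); rewrite E in Hh'; exact (eq_sym Hh'). }
    destruct (classic (P z)) as [n | n].
    + change z with (proj1_sig (exist P z n)).
      rewrite extend_fun_in, (lower_spec HP h' Hh'def); f_equal.
      apply Hu; intros i s; apply lower_natural, Hh'.
    + rewrite extend_fun_out by exact n.
      apply (lift_fun_eq_None (p i0)); transitivity (q i0 z); [apply Hh' | apply Hundef, n].
Qed.
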